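(* Let $X,Y,Z$ be random variables on finite alphabets $\mathcal{X},\mathcal{Y},\mathcal{Z}$, and define the redundant information $\operatorname{Red}(X,Y\to Z)=I(X;Z)-\operatorname{Un}(X\to Z\mid Y)$ with $\operatorname{Un}$ as below. Then $\operatorname{Red}(X,Y\to Z)\ge 0$.
   Context: For each $y\in\mathcal{Y}$ with $\Pr(Y=y)>0$, let $(A_y,B_y,C_y)$ be the random triple on $\mathcal{X}\times\mathcal{Y}\times\mathcal{Z}$ with $\Pr(A_y=x,B_y=y',C_y=z)=0$ if $\Pr(Z=z)=0$ and $\Pr(A_y=x,B_y=y',C_y=z)=\Pr(X=x,Y=y',Z=z)\Pr(Z=z\mid Y=y)/\Pr(Z=z)$ otherwise. The unique information is $\operatorname{Un}(X\to Z\mid Y)=\sum_{y:\Pr(Y=y)>0}\Pr(Y=y)\,I(A_y;C_y)$, where $I$ is mutual information. *)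

From mathcomp Require Import all_boot all_order all_algebra.
From mathcomp Require Import reals exp.
Set Implicit Arguments. Unset Strict Implicit. Unset Printing Implicit Defensive.
Import Order.TTheory GRing.Theory Num.Theory.
Local Open Scope ring_scope.

Section InfoDefs.
Variable R : realType.

Definition is_pmf (T : finType) (p : T -> R) : Prop :=
  (forall t, 0 <= p t) /\ \sum_(t : T) p t = 1.

Definition mutual_info (U V : finType) (q : U * V -> R) : R :=
  \sum_(a : U) \sum_(c : V)
    (if q (a, c) == 0 then 0
     else q (a, c) * ln (q (a, c) /
            ((\sum_(c' : V) q (a, c')) * (\sum_(a' : U) q (a', c))))).

Variables (X Y Z : finType).
Variable P : X * Y * Z -> R.

Definition PY (y : Y) : R := \sum_(x : X) \sum_(z : Z) P (x, y, z).
Definition PZ (z : Z) : R := \sum_(x : X) \sum_(y : Y) P (x, y, z).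
Definition PYZ (y : Y) (z : Z) : R := \sum_(x : X) P (x, y, z).
Definition PXZ (x : X) (z : Z) : R := \sum_(y : Y) P (x, y, z).

(* Pr(Z = z | Y = y), used only when Pr(Y = y) > 0. *)
Definition condZY (z : Z) (y : Y) : R := PYZ y z / PY y.

(* Joint pmf of the triple (A_y, B_y, C_y). *)
Definition triple_y (y : Y) (t : X * Y * Z) : R :=
  let: (x, y', z) := t in
  if PZ z == 0 then 0 else P (x, y', z) * condZY z y / PZ z.

Definition pairAC_y (y : Y) (u : X * Z) : R :=
  \sum_(y' : Y) triple_y y (u.1, y', u.2).

Definition Un : R := \sum_(y : Y | 0 < PY y) PY y * mutual_info (pairAC_y y).

Definition IXZ : R := mutual_info (fun u : X * Z => PXZ u.1 u.2).

Definition Red : R := IXZ - Un.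

End InfoDefs.

(* For each y, the pair (A_y, C_y) has law p(x | z) p(z | y): C_y is distributed
   as Z given Y = y and A_y is obtained from it through the channel p(x | z).
   By Gibbs' inequality, I(A_y; C_y) is at most the relative entropy of this law
   to p_X times the law of C_y, which is the expectation of
   ln (p(x, z) / (p(x) p(z))) under it. Averaging over y turns the law of
   (A_y, C_y) into p(x, z), and the bound into I(X; Z); hence Un <= I(X; Z). *)

From mathcomp Require Import all_boot all_order all_algebra.
From mathcomp Require Import reals exp.
From mathcomp Require Import ring.
Set Implicit Arguments. Unset Strict Implicit. Unset Printing Implicit Defensive.
Import Order.TTheory GRing.Theory Num.Theory.
Local Open Scope ring_scope.

Section MutualInfo.
Variable R : realType.

Lemma ln_le_subr1 (t : R) : 0 < t -> ln t <= t - 1.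
Proof. by move=> t_gt0; rewrite -[t in ln t](subrK 1) addrC le_ln1Dx // ltrBrDl subrr. Qed.

Lemma ler_sum_term (I : finType) (F : I -> R) i :
  (forall j, 0 <= F j) -> F i <= \sum_j F j.
Proof. by move=> F_ge0; rewrite (bigD1 i) //= lerDl sumr_ge0. Qed.

Variables (U V : finType) (q : U * V -> R).

Lemma mutual_infoE : mutual_info q =
  \sum_a \sum_c q (a, c) *
    ln (q (a, c) / ((\sum_c' q (a, c')) * (\sum_a' q (a', c)))).
Proof.
by apply: eq_bigr => a _; apply: eq_bigr => c _; case: eqP => [->|]; rewrite ?mul0r.
Qed.

Hypothesis q_ge0 : forall u, 0 <= q u.

(* The variational bound I(A;C) <= D(q || r x q_C), by Gibbs' inequality. *)
Lemma mutual_info_le_reference (r : U -> R) :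
  (forall a, 0 <= r a) -> \sum_a r a <= \sum_a \sum_c q (a, c) ->
  (forall a c, 0 < q (a, c) -> 0 < r a) ->
  mutual_info q <= \sum_a \sum_c q (a, c) * ln (q (a, c) / (r a * \sum_a' q (a', c))).
Proof.
move=> r_ge0 sum_r r_gt0.
set qA := fun a => \sum_c q (a, c); set qC := fun c => \sum_a q (a, c).
have pointwise a c : q (a, c) * ln (q (a, c) / (qA a * qC c)) <=
    q (a, c) * ln (q (a, c) / (r a * qC c)) + q (a, c) * (r a / qA a - 1).
  have [->|q_neq0] := eqVneq (q (a, c)) 0; first by rewrite !mul0r addr0.
  have q_gt0 : 0 < q (a, c) by rewrite lt_def q_neq0 q_ge0.
  have qA_gt0 : 0 < qA a.
    by apply: lt_le_trans q_gt0 (ler_sum_term (F := fun c => q (a, c)) _ _).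
  have qC_gt0 : 0 < qC c.
    by apply: lt_le_trans q_gt0 (ler_sum_term (F := fun a => q (a, c)) _ _).
  have ra_gt0 := r_gt0 _ _ q_gt0.
  have -> : q (a, c) / (qA a * qC c) = q (a, c) / (r a * qC c) * (r a / qA a).
    by field; rewrite !gt_eqF.
  rewrite lnM ?posrE ?divr_gt0 ?mulr_gt0 // mulrDr lerD2l.
  by rewrite ler_wpM2l ?q_ge0 ?ln_le_subr1 ?divr_gt0.
have deficit a : \sum_c q (a, c) * (r a / qA a - 1) <= r a - qA a.
  rewrite -mulr_suml -/(qA a).
  have [->|qA_neq0] := eqVneq (qA a) 0; first by rewrite mul0r subr0.
  by rewrite mulrBr mulr1 mulrC divfK.
rewrite mutual_infoE.
apply: le_trans (ler_sum _ (fun a _ => ler_sum _ (fun c _ => pointwise a c))) _.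
under eq_bigr do rewrite big_split /=.
rewrite big_split /= -[X in _ <= X]addr0 lerD2l.
apply: le_trans (ler_sum _ (fun a _ => deficit a)) _.
by rewrite sumrB subr_le0.
Qed.

End MutualInfo.

Section UniqueInfo.
Variables (R : realType) (X Y Z : finType) (P : X * Y * Z -> R).
Hypothesis P_ge0 : forall t, 0 <= P t.

Definition PX (x : X) : R := \sum_z PXZ P x z.

Lemma PXZ_ge0 x z : 0 <= PXZ P x z.
Proof. exact: sumr_ge0. Qed.

Lemma PYZ_ge0 y z : 0 <= PYZ P y z.
Proof. exact: sumr_ge0. Qed.

Lemma PY_ge0 y : 0 <= PY P y.
Proof. by apply: sumr_ge0 => x _; apply: sumr_ge0. Qed.

Lemma PZ_ge0 z : 0 <= PZ P z.
Proof. by apply: sumr_ge0 => x _; apply: PXZ_ge0. Qed.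

Lemma PX_ge0 x : 0 <= PX x.
Proof. by apply: sumr_ge0 => z _; apply: PXZ_ge0. Qed.

Lemma PY_sumPYZ y : PY P y = \sum_z PYZ P y z.
Proof. exact: exchange_big. Qed.

Lemma PZ_sumPYZ z : PZ P z = \sum_y PYZ P y z.
Proof. exact: exchange_big. Qed.

Lemma PZ_eq0_PXZ x z : PZ P z = 0 -> PXZ P x z = 0.
Proof. by move/psumr_eq0P; apply=> // x' _; apply: PXZ_ge0. Qed.

Lemma PZ_eq0_PYZ y z : PZ P z = 0 -> PYZ P y z = 0.
Proof. by rewrite PZ_sumPYZ => /psumr_eq0P; apply=> // y' _; apply: PYZ_ge0. Qed.

Lemma PY_eq0_PYZ y z : PY P y = 0 -> PYZ P y z = 0.
Proof. by rewrite PY_sumPYZ => /psumr_eq0P; apply=> // z' _; apply: PYZ_ge0. Qed.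

Lemma sum_condZY y : 0 < PY P y -> \sum_z condZY P z y = 1.
Proof. by move=> PY_gt0; rewrite -mulr_suml -PY_sumPYZ divff // gt_eqF. Qed.

Lemma pairAC_yE y x z : pairAC_y P y (x, z) = PXZ P x z * condZY P z y / PZ P z.
Proof.
rewrite /pairAC_y /triple_y /=; case: eqP => [->|_]; last by rewrite -!mulr_suml.
by rewrite big1 ?invr0 ?mulr0.
Qed.

Lemma pairAC_y_ge0 y u : 0 <= pairAC_y P y u.
Proof.
by case: u => x z; rewrite pairAC_yE !mulr_ge0 ?invr_ge0 ?PXZ_ge0 ?PYZ_ge0 ?PY_ge0 ?PZ_ge0.
Qed.

Lemma sum_pairAC_y y z : \sum_x pairAC_y P y (x, z) = condZY P z y.
Proof.
under eq_bigr do rewrite pairAC_yE.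
rewrite -!mulr_suml; have [PZ0|PZ_neq0] := eqVneq (PZ P z) 0.
  by rewrite /condZY PZ_eq0_PYZ // !(mul0r, mulr0).
by rewrite mulrAC divff // mul1r.
Qed.

Lemma pairAC_y_lnE y x z :
  pairAC_y P y (x, z) * ln (pairAC_y P y (x, z) / (PX x * condZY P z y)) =
  pairAC_y P y (x, z) * ln (PXZ P x z / (PX x * PZ P z)).
Proof.
have [->|] := eqVneq (pairAC_y P y (x, z)) 0; first by rewrite !mul0r.
rewrite pairAC_yE; move: (condZY P z y) => c.
rewrite !mulf_eq0 !negb_or invr_eq0 => /andP[/andP[_ c_neq0] PZ_neq0].
congr (_ * ln _); rewrite mulrAC [PX x * c]mulrC invfM mulrA mulfK //.
by rewrite -mulrA -invfM mulrC.
Qed.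

(* pairAC_y y (x, z) = p(x | z) p(z | y), and averaging p(z | y) over y gives p(z). *)
Lemma mix_pairAC_y x z :
  \sum_(y | 0 < PY P y) PY P y * pairAC_y P y (x, z) = PXZ P x z.
Proof.
have [PZ0|PZ_neq0] := eqVneq (PZ P z) 0.
  by rewrite PZ_eq0_PXZ // big1 // => y _; rewrite pairAC_yE PZ0 invr0 !mulr0.
have term y : 0 < PY P y ->
    PY P y * pairAC_y P y (x, z) = PYZ P y z * (PXZ P x z / PZ P z).
  by move=> PY_gt0; rewrite pairAC_yE /condZY; field; rewrite PZ_neq0 gt_eqF.
rewrite (eq_bigr _ term) -mulr_suml.
have -> : \sum_(y | 0 < PY P y) PYZ P y z = PZ P z.
  rewrite PZ_sumPYZ big_mkcond /=; apply: eq_bigr => y _.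
  case: ifP => // /negbT; rewrite -leNgt => PY_le0.
  by apply/esym/PY_eq0_PYZ/le_anti; rewrite PY_le0 PY_ge0.
by rewrite mulrC divfK.
Qed.

Lemma sum_PX : \sum_x PX x = \sum_t P t.
Proof.
under eq_bigr do rewrite /PX /PXZ exchange_big.
by rewrite pair_big pair_big /=; apply: eq_bigr => -[[x y] z].
Qed.

Hypothesis P_sum_le1 : \sum_t P t <= 1.

Lemma mutual_info_pairAC_y_le y : 0 < PY P y ->
  mutual_info (pairAC_y P y) <=
  \sum_x \sum_z pairAC_y P y (x, z) * ln (PXZ P x z / (PX x * PZ P z)).
Proof.
move=> PY_gt0; apply: le_trans (mutual_info_le_reference (pairAC_y_ge0 y) PX_ge0 _ _) _.
- rewrite sum_PX exchange_big /=; apply: le_trans P_sum_le1 _.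
  by under eq_bigr do rewrite sum_pairAC_y; rewrite sum_condZY.
- move=> x z; rewrite lt0r pairAC_yE !mulf_eq0 !negb_or => /andP[/andP[/andP[PXZ_neq0 _] _] _].
  have PXZ_gt0 : 0 < PXZ P x z by rewrite lt0r PXZ_neq0 PXZ_ge0.
  exact: lt_le_trans PXZ_gt0 (ler_sum_term (F := PXZ P x) z (PXZ_ge0 x)).
by under eq_bigr => x _ do under eq_bigr => z _ do
  rewrite sum_pairAC_y pairAC_y_lnE.
Qed.

Lemma Un_le_IXZ : Un P <= IXZ P.
Proof.
apply: le_trans (ler_sum _ (fun y PY_gt0 =>
  ler_wpM2l (PY_ge0 y) (mutual_info_pairAC_y_le PY_gt0))) _.
rewrite /IXZ mutual_infoE.
under eq_bigr do rewrite mulr_sumr.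
rewrite exchange_big /=; apply: ler_sum => x _.
under eq_bigr do rewrite mulr_sumr.
rewrite exchange_big /=; apply: ler_sum => z _.
by under eq_bigr do rewrite mulrA; rewrite -mulr_suml mix_pairAC_y.
Qed.

End UniqueInfo.

Theorem corollary3 (R : realType) (X Y Z : finType) (P : X * Y * Z -> R) :
  is_pmf P -> 0 <= Red P.
Proof. by move=> [P_ge0 P_sum1]; rewrite subr_ge0 Un_le_IXZ // P_sum1. Qed.
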